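(* The category $\mathrm{OS}_B^{\mathrm{op}}$ is Gröbner, and, with the norm $\nu([-n,n])=n$, it is $\mathsf{O}$-lingual with respect to the maps $\iota_{(E,\sigma)}:|(\mathrm{OS}_B^{\mathrm{op}})_{(E,\sigma)}|\to E^\star$.
   Context: $\mathrm{OS}_B$: objects $(E,\sigma)$ with $E$ totally ordered finite, $\sigma$ an order-reversing involution with unique fixed point $0$; $-e:=\sigma(e)$, $E^+=\{e>0\}$, $|e|=\max\{\pm e\}$, $\mathrm{init}\,D=\min\{|e|:e\in D\}$; morphisms are surjective equivariant maps with (i) $\mathrm{init}\,\varphi^{-1}(e)\in\varphi^{-1}(e)$ for $e\in E_2^+$ and (ii) $\mathrm{init}\,\varphi^{-1}(e)<\mathrm{init}\,\varphi^{-1}(f)$ for $e<f\in E_2^+$. Every object is uniquely isomorphic to some $[-n,n]$. For a category $\mathcal C$ and object $x$, morphisms $\varphi:x\to y$, $\varphi':x\to y'$ satisfy $\varphi\le\varphi'$ if $\varphi'=\psi\circ\varphi$ for some $\psi$; $|\mathcal C_x|$ is the poset of equivalence classes. $\mathcal C$ is directed if its only endomorphisms are identities; it has (G1) if for every $x$ there is a well order $\prec$ on the set of (isomorphism classes of) morphisms out of $x$ with $\varphi\prec\varphi'\Rightarrow\psi\circ\varphi\prec\psi\circ\varphi'$ whenever defined; (G2) if every $|\mathcal C_x|$ is Noetherian (every upward-closed subset has finitely many minimal elements); Gröbner means directed with (G1) and (G2). A norm $\nu$ assigns a natural number to each isomorphism class of objects; $\mathcal C$ is $\mathsf{O}$-lingual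 if for each $x$ there are a finite set $\Sigma_x$ and an injection $\iota_x:|\mathcal C_x|\to\Sigma_x^\star$ such that $\iota_x(\varphi:x\to y)$ has length $\nu(y)$ and $\iota_x(I)$ is an ordered language for every upward-closed $I$. Ordered languages on $\Sigma$: the smallest collection of subsets of $\Sigma^\star$ containing singletons and $\Pi^\star$ ($\Pi\subset\Sigma$) and closed under finite unions and concatenations. Here $\Sigma_{(E,\sigma)}=E$ and, for an $\mathrm{OS}_B$-morphism $\varphi:[-n,n]\to(E,\sigma)$ (a morphism out of $(E,\sigma)$ in $\mathrm{OS}_B^{\mathrm{op}}$), $\iota_{(E,\sigma)}(\varphi)=\varphi(1)\cdots\varphi(n)$. *)

(* Skeletal model of OS_B: the object [-n,n] is encoded by
   n : nat; its elements are the ordinals 'I_(2n+1), the ordinal i standing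
   for the integer i - n.  The involution sigma (e |-> -e) is rev_ord. *)
From mathcomp Require Import all_boot all_order all_algebra.
Set Implicit Arguments. Unset Strict Implicit. Unset Printing Implicit Defensive.
Import Order.TTheory GRing.Theory Num.Theory.

Definition elt (n : nat) := 'I_(n.*2.+1).

Definition toZ {n : nat} (i : elt n) : int := (Posz (nat_of_ord i) - Posz n)%R.

Definition sigma {n : nat} (i : elt n) : elt n := rev_ord i.

Definition fib {m n : nat} (f : {ffun elt m -> elt n}) (e : elt n) : elt m -> Prop :=
  fun d => f d = e.

Definition is_init {m : nat} (D : elt m -> Prop) (k : nat) : Prop :=
  (exists d, D d /\ absz (toZ d) = k) /\ (forall d, D d -> (k <= absz (toZ d))%N).

(* init D \in D : the element of value init D (which is >= 0) lies in D *)
Definition init_in {m : nat} (D : elt m -> Prop) : Prop :=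
  exists k, is_init D k /\ exists d, D d /\ toZ d = Posz k.

Definition isOSB {m n : nat} (f : {ffun elt m -> elt n}) : Prop :=
  (forall j : elt n, exists i : elt m, f i = j) /\
  (forall i : elt m, f (sigma i) = sigma (f i)) /\
  (forall e : elt n, (0 < toZ e)%R -> init_in (fib f e)) /\
  (forall e e' : elt n, (0 < toZ e)%R -> (toZ e < toZ e')%R ->
     forall k k', is_init (fib f e) k -> is_init (fib f e') k' -> (k < k')%N).

Definition compB {p m n : nat} (f : {ffun elt m -> elt n}) (h : {ffun elt p -> elt m})
  : {ffun elt p -> elt n} := [ffun i => f (h i)].

(* A morphism out of [-n,n] in OS_B^op, with target [-m,m], is an
   OS_B-morphism [-m,m] -> [-n,n]. *)
Definition arr (n : nat) := {m : nat & {ffun elt m -> elt n}}.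

Definition valid {n : nat} (a : arr n) : Prop := isOSB (projT2 a).

(* a <= b in |(OS_B^op)_n| : b = psi o_op a for some psi, i.e. b = a \o h in OS_B *)
Definition arr_le {n : nat} (a b : arr n) : Prop :=
  exists h : {ffun elt (projT1 b) -> elt (projT1 a)},
    isOSB h /\ projT2 b = compB (projT2 a) h.

Definition arr_equiv {n : nat} (a b : arr n) : Prop := arr_le a b /\ arr_le b a.

Definition OSBop_directed : Prop :=
  forall (n : nat) (f : {ffun elt n -> elt n}), isOSB f -> f = [ffun i => i].

Definition well_order_on {T : Type} (V : T -> Prop) (lt : T -> T -> Prop) : Prop :=
  (forall a, V a -> ~ lt a a) /\
  (forall a b c, V a -> V b -> V c -> lt a b -> lt b c -> lt a c) /\
  (forall a b, V a -> V b -> a = b \/ lt a b \/ lt b a) /\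
  (forall a, V a -> Acc (fun x y => V x /\ V y /\ lt x y) a).

(* (G1). Isomorphism classes of morphisms out of [-n,n] are the morphisms
   themselves, since the model is skeletal and automorphisms are trivial. *)
Definition OSBop_G1 : Prop :=
  forall n : nat, exists lt : arr n -> arr n -> Prop,
    well_order_on (@valid n) lt /\
    forall (m p : nat) (f g : {ffun elt m -> elt n}) (h : {ffun elt p -> elt m}),
      isOSB f -> isOSB g -> isOSB h ->
      lt (existT _ m f) (existT _ m g) ->
      lt (existT _ p (compB f h)) (existT _ p (compB g h)).

Definition upclosed {n : nat} (I : arr n -> Prop) : Prop :=
  (forall a, I a -> valid a) /\
  (forall a b, valid b -> I a -> arr_le a b -> I b).

Definition minimal_in {n : nat} (I : arr n -> Prop) (a : arr n) : Prop :=
  I a /\ forall b, I b -> arr_le b a -> arr_le a b.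

(* (G2): every upward-closed subset has finitely many minimal elements
   (counted up to equivalence, i.e. in the poset |(OS_B^op)_n|). *)
Definition OSBop_G2 : Prop :=
  forall (n : nat) (I : arr n -> Prop), upclosed I ->
    exists S : seq (arr n),
      (forall s, s \in S -> minimal_in I s) /\
      (forall a, minimal_in I a -> exists2 s, s \in S & arr_equiv a s).

Definition OSBop_Grobner : Prop := OSBop_directed /\ OSBop_G1 /\ OSBop_G2.

Definition lang (Sigma : Type) := seq Sigma -> Prop.

Inductive ordered_lang {Sigma : Type} : lang Sigma -> Prop :=
  | OL_single (w : seq Sigma) : ordered_lang (fun u => u = w)
  | OL_star (Pi : pred Sigma) : ordered_lang (fun u => all Pi u)
  | OL_empty : ordered_lang (fun _ => False)      (* empty finite union *)
  | OL_union (L1 L2 : lang Sigma) : ordered_lang L1 -> ordered_lang L2 ->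
      ordered_lang (fun u => L1 u \/ L2 u)
  | OL_cat (L1 L2 : lang Sigma) : ordered_lang L1 -> ordered_lang L2 ->
      ordered_lang (fun u => exists u1 u2, u = u1 ++ u2 /\ L1 u1 /\ L2 u2)
  | OL_ext (L1 L2 : lang Sigma) : (forall u, L1 u <-> L2 u) ->
      ordered_lang L1 -> ordered_lang L2.

(* iota_{[-n,n]}(phi : [-m,m] -> [-n,n]) = phi(1) phi(2) ... phi(m) in E^* *)
Definition iota_word {n : nat} (a : arr n) : seq (elt n) :=
  let m := projT1 a in
  [seq projT2 a (inord (m + k) : elt m) | k <- iota 1 m].

Definition nu (m : nat) : nat := m.

Definition OSBop_Olingual_wrt_iota : Prop :=
  forall n : nat,
    (forall a b : arr n, valid a -> valid b -> iota_word a = iota_word b -> arr_equiv a b) /\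
    (forall a : arr n, valid a -> size (iota_word a) = nu (projT1 a)) /\
    (forall I : arr n -> Prop, upclosed I ->
       ordered_lang (fun w : seq (elt n) => exists a, I a /\ w = iota_word a)).

From mathcomp Require Import all_boot all_order all_algebra.
From mathcomp Require Import zify.
From Stdlib Require Import ClassicalEpsilon Classical.
Set Implicit Arguments. Unset Strict Implicit. Unset Printing Implicit Defensive.
Import Order.TTheory GRing.Theory Num.Theory.

(* In integer coordinates, an equivariant map f : [-m,m] -> [-n,n] is the odd
   extension of its word f(1)...f(m).  Conditions (i) and (ii) say that the first
   letters of absolute value 1, ..., n are +1, ..., +n and occur in this order;
   equivalently the word is a staircase y_0 1 y_1 2 ... n y_n whose factors y_i
   only use letters of absolute value at most i.  Composition is substitution of
   words.  From this description:
   - directedness: an endomorphism has a staircase word of length n, i.e. 1 2 ... n;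
   - (G1): arrows are well ordered by length, then lexicographically, and
     substitution into a staircase word is lexicographically monotone;
   - s <= a iff the word of a lies in the cone language of the word c_1...c_m
     of s, known()* c_1 known(c_1)* c_2 ... c_m known(c_1...c_m)*;
   - (G2): annotating each letter by the set of letters before it, an embedding
     of annotated words (Higman's lemma, via a minimal bad sequence) places the
     larger word in the cone of the smaller, so minimal elements of an
     upward-closed set have bounded length, hence are finitely many;
   - O-lingual: the word determines the arrow, and the image of an upward-closed
     set is the finite union of the cone languages of its minimal elements. *)

Definition ofZ {m : nat} (z : int) : elt m := inord (absz (z + Posz m)%R).

Lemma toZ_ofZ m (z : int) : (absz z <= m)%N -> toZ (ofZ (m:=m) z) = z.
Proof. by move=> zm; rewrite /toZ /ofZ inordK; lia. Qed.

Lemma ofZ_toZ m (d : elt m) : ofZ (toZ d) = d.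
Proof. by apply: val_inj; rewrite /= /ofZ /toZ inordK; have := ltn_ord d; lia. Qed.

Lemma toZ_bound m (d : elt m) : (absz (toZ d) <= m)%N.
Proof. by rewrite /toZ; have := ltn_ord d; lia. Qed.

Lemma toZ_inj m : injective (@toZ m).
Proof. by move=> a b eq_ab; rewrite -(ofZ_toZ a) -(ofZ_toZ b) eq_ab. Qed.

Lemma toZ_sigma m (d : elt m) : toZ (sigma d) = (- toZ d)%R.
Proof. by rewrite /toZ /sigma /=; have := ltn_ord d; lia. Qed.

Lemma sigma_ofZ m (z : int) : (absz z <= m)%N -> sigma (ofZ (m:=m) z) = ofZ (- z)%R.
Proof. by move=> zm; apply: toZ_inj; rewrite toZ_sigma !toZ_ofZ //; lia. Qed.

Definition bounded (n : nat) : pred int := fun z => (absz z <= n)%N.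

(* The odd extension of a word w = w_1...w_m to [-m,m]:
   0 |-> 0, k |-> w_k and -k |-> -w_k.  Every equivariant map is of this form. *)
Definition ext_word (w : seq int) (z : int) : int :=
  match z with
  | Posz 0 => 0%R
  | Posz k.+1 => nth 0%R w k
  | Negz k => (- nth 0%R w k)%R
  end.

Lemma abs_ext_word w z :
  absz (ext_word w z) = if z == 0%R then 0%N else absz (nth 0%R w (absz z).-1).
Proof. by case: z => [[|k]|k] //=; rewrite abszN. Qed.

Lemma ext_wordN w z : ext_word w (- z)%R = (- ext_word w z)%R.
Proof. by case: z => [[|k]|k] //=; rewrite ?opprK. Qed.

Lemma ext_word_bounded w n z : all (bounded n) w -> bounded n (ext_word w z).
Proof.
move=> wn; rewrite /bounded abs_ext_word; case: eqP => // _.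
have [lt_zw|le_wz] := ltnP (absz z).-1 (size w); last by rewrite nth_default.
by apply: (allP wn); apply: mem_nth.
Qed.

Lemma ext_word_prefix (u u' : seq int) i z :
  (forall j, (j < i)%N -> nth 0%R u j = nth 0%R u' j) -> (absz z <= i)%N ->
  ext_word u z = ext_word u' z.
Proof. by move=> eq_uu'; case: z => [[|k]|k] //= zi; rewrite eq_uu'. Qed.

Lemma ext_word_pos (w : seq int) (z : int) (e : nat) : (0 < e)%N ->
  ext_word w z = Posz e -> z != 0%R /\ absz (nth 0%R w (absz z).-1) = e.
Proof. by move=> e_gt0; case: z => [[|k]|k] /= wz; [lia| |]; split=> //; lia. Qed.

Lemma find_le (T : Type) x0 (P : pred T) (y : seq T) j :
  P (nth x0 y j) -> (find P y <= j)%N.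
Proof. by move=> Pj; rewrite leqNgt; apply/negP => /(before_find x0); rewrite Pj. Qed.

Lemma find_eq (T : Type) x0 (P : pred T) (y : seq T) t :
  (t < size y)%N -> P (nth x0 y t) -> (forall j, (j < t)%N -> ~~ P (nth x0 y j)) ->
  find P y = t.
Proof.
move=> t_lt Pt before; apply/eqP; rewrite eqn_leq (find_le Pt) /= leqNgt.
apply/negP => /before; rewrite nth_find // has_find.
exact: leq_ltn_trans (find_le Pt) t_lt.
Qed.

Lemma find_cat_cons (T : Type) (P : pred T) (y1 : seq T) x y2 : ~~ has P y1 ->
  find P (y1 ++ x :: y2) = if P x then size y1 else (size y1 + (find P y2).+1)%N.
Proof. by move=> Py1; rewrite find_cat (negbTE Py1) /=; case: (P x); rewrite ?addn0. Qed.

Definition first_pos (e : nat) (w : seq int) : nat := find (fun z : int => absz z == e) w.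

Lemma bounded_no_abs (y : seq int) k e :
  all (bounded k) y -> (k < e)%N -> ~~ has (fun z : int => absz z == e) y.
Proof. by move=> /allP yk ke; apply/hasPn => z /yk; rewrite /bounded; lia. Qed.

(* For k = 0 this is
   exactly what conditions (i) and (ii) say about the word of a morphism. *)
Definition occ_ordered (k n : nat) (y : seq int) : Prop :=
  all (bounded n) y /\
  (forall e, (k < e <= n)%N ->
     (first_pos e y < size y)%N /\ nth 0%R y (first_pos e y) = Posz e) /\
  (forall e e', (k < e)%N -> (e < e' <= n)%N -> (first_pos e y < first_pos e' y)%N).

Fixpoint staircase (d k : nat) (y : seq int) : Prop :=
  match d with
  | 0 => all (bounded k) y
  | d'.+1 => exists y1 y2, y = y1 ++ Posz k.+1 :: y2 /\
                           all (bounded k) y1 /\ staircase d' k.+1 y2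
  end.

Section OccOrderedStep.
Variables (k n : nat) (y1 y2 : seq int).
Hypotheses (lt_kn : (k < n)%N) (y1_k : all (bounded k) y1).
Let y := y1 ++ Posz k.+1 :: y2.

Let first_pos_head : first_pos k.+1 y = size y1.
Proof. by rewrite /first_pos find_cat_cons ?(bounded_no_abs y1_k) //= eqxx. Qed.

Let first_pos_tail e :
  (k.+1 < e)%N -> first_pos e y = (size y1 + (first_pos e y2).+1)%N.
Proof.
move=> ke; rewrite /first_pos find_cat_cons ?(bounded_no_abs y1_k) //; last lia.
by have -> : (absz (Posz k.+1) == e) = false by apply/eqP => /= ?; lia.
Qed.

Lemma occ_ordered_cons : occ_ordered k.+1 n y2 -> occ_ordered k n y.
Proof.
move=> [y2_n [occ2 ord2]]; split; [|split].
- rewrite /y all_cat /= y2_n andbT; apply/andP; split; last by rewrite /bounded; lia.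
  by apply: sub_all y1_k => z; rewrite /bounded; lia.
- move=> e /andP [ke en]; case: (ltngtP e k.+1) => ek; first lia.
    have [pos2 val2] := occ2 e ltac:(lia).
    rewrite first_pos_tail // /y size_cat /= nth_cat ifN; last lia.
    have -> : (size y1 + (first_pos e y2).+1 - size y1 = (first_pos e y2).+1)%N by lia.
    by rewrite /= val2; split=> //; lia.
  by subst e; rewrite first_pos_head /y size_cat /= nth_cat ltnn subnn /=; split=> //; lia.
- move=> e e' ke ee'; rewrite (first_pos_tail (e := e')); last lia.
  case: (ltngtP e k.+1) => ek; first lia.
    by rewrite first_pos_tail //; have := ord2 e e' ek ee'; lia.
  by subst e; rewrite first_pos_head; lia.
Qed.

End OccOrderedStep.

Section OccOrderedSplit.
Variables (k n : nat) (y : seq int).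
Hypotheses (lt_kn : (k < n)%N) (occ_y : occ_ordered k n y).
Let i := first_pos k.+1 y.

(* Before the first occurrence of k+1, no value above k can occur, since its
   own first occurrence comes after that of k+1. *)
Lemma occ_ordered_prefix : all (bounded k) (take i y).
Proof.
have [y_n [occ ord]] := occ_y; have [i_lt _] := occ k.+1 ltac:(lia).
apply/allP => z /(nthP 0%R) [j]; rewrite size_take i_lt => ji <-.
rewrite nth_take // /bounded.
have nk : (absz (nth 0%R y j) == k.+1) = false by have := before_find 0%R ji; rewrite /= => ->.
have yj_n : (absz (nth 0%R y j) <= n)%N.
  by apply: (allP y_n); apply: mem_nth; exact: ltn_trans ji i_lt.
case: (leqP (absz (nth 0%R y j)) k) => // yj_gt.
have := ord k.+1 (absz (nth 0%R y j)) (ltnSn k) ltac:(lia).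
have := @find_le _ 0%R (fun z : int => absz z == absz (nth 0%R y j)) y j (eqxx _).
by rewrite -/(first_pos _ y) -/(first_pos k.+1 y) -/i; lia.
Qed.

Lemma occ_ordered_split :
  exists y1 y2, y = y1 ++ Posz k.+1 :: y2 /\ all (bounded k) y1 /\
                occ_ordered k.+1 n y2.
Proof.
have [y_n [occ ord]] := occ_y; have [i_lt yi] := occ k.+1 ltac:(lia).
have y_eq : y = take i y ++ Posz k.+1 :: drop i.+1 y.
  by rewrite -yi -drop_nth // cat_take_drop.
have pos_tail e : (k.+1 < e)%N -> first_pos e y = (i + (first_pos e (drop i.+1 y)).+1)%N.
  move=> ke; rewrite /first_pos {1}y_eq find_cat_cons.
    rewrite size_take i_lt.
    by have -> : (absz (Posz k.+1) == e) = false by apply/eqP => /= ?; lia.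
  by apply: (bounded_no_abs occ_ordered_prefix); lia.
exists (take i y), (drop i.+1 y); do 2![split=> //; try exact: occ_ordered_prefix].
split; [|split].
- by apply/allP => z /mem_drop /(allP y_n).
- move=> e ke; have [pos val] := occ e ltac:(lia).
  have := pos_tail e ltac:(lia); rewrite size_drop nth_drop => pos_eq; split; first lia.
  by rewrite -val pos_eq; congr nth; lia.
- move=> e e' ke ee'; have := ord e e' ltac:(lia) ee'.
  by rewrite (pos_tail e) ?(pos_tail e'); lia.
Qed.

End OccOrderedSplit.

Lemma staircase_occ_ordered d k y : staircase d k y <-> occ_ordered k (k + d) y.
Proof.
elim: d k y => [|d IH] k y /=.
  rewrite addn0; split; last by case.
  by move=> y_k; split=> //; split=> [e|e e']; lia.
rewrite -addSnnS; split.
- move=> [y1 [y2 [-> [y1_k /IH]]]]; exact: (occ_ordered_cons (ltn_addr d (ltnSn k)) y1_k).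
- move=> /occ_ordered_split [|y1 [y2 [-> [y1_k /IH y2_st]]]]; first lia.
  by exists y1, y2.
Qed.

Lemma staircase_size d k y : staircase d k y -> (d <= size y)%N.
Proof.
elim: d k y => [|d IH] k y //= [y1 [y2 [-> [_ /IH le_dy2]]]].
by rewrite size_cat /=; lia.
Qed.

Lemma staircase_exact d k y : staircase d k y -> size y = d -> y = map Posz (iota k.+1 d).
Proof.
elim: d k y => [|d IH] k y /=; first by case: y.
move=> [y1 [y2 [-> [_ st2]]]]; have := staircase_size st2.
case: y1 => [|z y1] /=; last by rewrite size_cat /=; lia.
by move=> _ [/(IH _ _ st2) ->].
Qed.

Lemma staircase_iota d k : staircase d k (map Posz (iota k.+1 d)).
Proof. by elim: d k => [|d IH] k //=; exists [::], (map Posz (iota k.+2 d)). Qed.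

Section ExtWordComposition.
Variables (n m : nat) (u y : seq int).
Hypotheses (size_u : size u = m) (occ_u : occ_ordered 0 n u) (occ_y : occ_ordered 0 m y).

Lemma first_pos_ext e : (0 < e <= n)%N ->
  first_pos e (map (ext_word u) y) = first_pos (first_pos e u).+1 y.
Proof.
have [_ [occ_u1 _]] := occ_u; have [y_m [occ_y1 ord_y]] := occ_y.
move=> en; have [pos_u val_u] := occ_u1 e en; set p := first_pos e u in pos_u val_u *.
have [pos_y val_y] := occ_y1 p.+1 ltac:(lia).
rewrite /first_pos find_map; apply: (@find_eq int 0%R) => //.
  by rewrite /preim /= abs_ext_word val_y /= val_u.
move=> j jp; rewrite /preim /= abs_ext_word.
case: ifP => [_|/eqP yj_neq0]; first by apply/eqP; lia.
have c_gt0 : (0 < absz (nth 0%R y j))%N by rewrite absz_gt0; apply/eqP.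
set c := absz (nth 0%R y j) in c_gt0 *.
have c_m : (c <= m)%N by apply: (allP y_m); apply: mem_nth; exact: ltn_trans jp pos_y.
case: (ltngtP c p.+1) => cp.
- have c_before : (c.-1 < p)%N by lia.
  by rewrite (@before_find _ 0%R (fun z : int => absz z == e) u c.-1 c_before).
- have := ord_y p.+1 c ltac:(lia) ltac:(lia).
  have := @find_le _ 0%R (fun z : int => absz z == c) y j (eqxx _).
  by rewrite -/(first_pos c y) /first_pos; lia.
- have := @before_find _ 0%R (fun z : int => absz z == p.+1) y j jp.
  by rewrite /= -/c cp eqxx.
Qed.

(* Substituting an ordered word into an ordered word gives an ordered word:
   the word-level form of closure of OS_B-morphisms under composition. *)
Lemma occ_ordered_ext : occ_ordered 0 n (map (ext_word u) y).
Proof.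
have [u_n [occ_u1 ord_u]] := occ_u; have [_ [occ_y1 ord_y]] := occ_y.
split; [|split].
- by apply/allP => z /mapP [x _ ->]; exact: ext_word_bounded.
- move=> e en; rewrite first_pos_ext // size_map; have [pos_u val_u] := occ_u1 e en.
  have [pos_y val_y] := occ_y1 (first_pos e u).+1 ltac:(lia).
  by split=> //; rewrite (nth_map 0%R) // val_y.
- move=> e e' e_gt0 ee'; rewrite !first_pos_ext; [|lia|lia].
  apply: ord_y; first lia.
  by have := ord_u e e' e_gt0 ee'; have [pos_u' _] := occ_u1 e' ltac:(lia); lia.
Qed.

End ExtWordComposition.

Section MapWord.
Variables (m n : nat).
Implicit Types (f g : {ffun elt m -> elt n}).

Definition equivariant f := forall i : elt m, f (sigma i) = sigma (f i).

Definition word_of f : seq int := [seq toZ (f (ofZ (Posz i))) | i <- iota 1 m].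

Lemma size_word_of f : size (word_of f) = m.
Proof. by rewrite size_map size_iota. Qed.

Lemma nth_word_of f k : (k < m)%N -> nth 0%R (word_of f) k = toZ (f (ofZ (Posz k.+1))).
Proof. by move=> km; rewrite (nth_map 0%N) ?size_iota // nth_iota // add1n. Qed.

Lemma word_of_bounded f : all (bounded n) (word_of f).
Proof. by apply/allP => z /mapP [i _ ->]; exact: toZ_bound. Qed.

Lemma equivariantE f : equivariant f -> forall d, toZ (f d) = ext_word (word_of f) (toZ d).
Proof.
move=> eqv d; have d_m := toZ_bound d.
rewrite -{1}(ofZ_toZ d); case: (toZ d) d_m => [[|k]|k] /= d_m.
- have fix0 : sigma (ofZ (m:=m) (Posz 0)) = ofZ (Posz 0) by rewrite sigma_ofZ.
  by have := congr1 toZ (eqv (ofZ (Posz 0))); rewrite fix0 toZ_sigma; lia.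
- by rewrite nth_word_of.
- have -> : ofZ (m:=m) (Negz k) = sigma (ofZ (Posz k.+1)) by rewrite sigma_ofZ.
  by rewrite eqv toZ_sigma nth_word_of.
Qed.

Lemma equivariant_word_inj f g :
  equivariant f -> equivariant g -> word_of f = word_of g -> f = g.
Proof. by move=> ef eg fg; apply/ffunP => d; apply: toZ_inj; rewrite !equivariantE // fg. Qed.

Section Fibres.
Variables (f : {ffun elt m -> elt n}) (e : elt n) (eps : nat).
Hypotheses (eqv_f : equivariant f) (e_eps : toZ e = Posz eps) (eps_gt0 : (0 < eps)%N).
Let w := word_of f.
Let p := first_pos eps w.

Lemma fibE d : fib f e d <-> ext_word w (toZ d) = toZ e.
Proof. by rewrite /fib -equivariantE //; split=> [-> | /toZ_inj]. Qed.

Let fib_lower d : fib f e d -> (p < m)%N /\ (p.+1 <= absz (toZ d))%N.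
Proof.
move=> /fibE; rewrite e_eps => /(ext_word_pos eps_gt0) [d_neq0 wd].
have := @find_le _ 0%R (fun z : int => absz z == eps) w (absz (toZ d)).-1.
rewrite wd eqxx -/(first_pos eps w) -/p => /(_ isT).
have : absz (toZ d) != 0%N by rewrite absz_eq0.
by have := toZ_bound d; lia.
Qed.

Let fib_attained : (p < m)%N -> exists d, fib f e d /\ absz (toZ d) = p.+1.
Proof.
move=> pm; have abs_wp : absz (nth 0%R w p) = eps.
  apply/eqP; apply: (@nth_find _ 0%R (fun z : int => absz z == eps)).
  by rewrite has_find size_word_of.
have [wp|wp] : nth 0%R w p = Posz eps \/ nth 0%R w p = (- Posz eps)%R by lia.
- exists (ofZ (Posz p.+1)); rewrite toZ_ofZ //; split=> //.
  by apply/fibE; rewrite toZ_ofZ // e_eps.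
- exists (ofZ (Negz p)); rewrite toZ_ofZ //; split=> //.
  by apply/fibE; rewrite toZ_ofZ // e_eps /= wp; lia.
Qed.

Lemma is_init_fib k : is_init (fib f e) k <-> (p < m)%N /\ k = p.+1.
Proof.
split.
- move=> [[d0 [fd0 ad0]] init_le]; have [pm _] := fib_lower fd0.
  have [d1 [fd1 ad1]] := fib_attained pm; have := init_le d1 fd1.
  by have := fib_lower fd0; lia.
- move=> [pm ->]; have [d1 [fd1 ad1]] := fib_attained pm.
  by split; [exists d1 | move=> d /fib_lower []].
Qed.

Lemma init_in_fib : init_in (fib f e) <-> (p < m)%N /\ nth 0%R w p = Posz eps.
Proof.
split.
- move=> [k [/is_init_fib [pm ->] [d [/fibE fd td]]]].
  by split=> //; rewrite td e_eps in fd.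
- move=> [pm wp]; exists p.+1; split; first exact/is_init_fib.
  exists (ofZ (Posz p.+1)); rewrite toZ_ofZ //; split=> //.
  by apply/fibE; rewrite toZ_ofZ // e_eps.
Qed.

End Fibres.
End MapWord.

Section Morphisms.
Variables (m n : nat) (f : {ffun elt m -> elt n}).

Let toZ_pos (e : nat) : (e <= n)%N -> toZ (ofZ (m:=n) (Posz e)) = Posz e.
Proof. by move=> en; rewrite toZ_ofZ. Qed.

(* Condition (i) gives the signs of the first occurrences, (ii) their order. *)
Lemma isOSB_occ_ordered : isOSB f -> equivariant f /\ occ_ordered 0 n (word_of f).
Proof.
move=> [_ [eqv [init_in_f init_lt]]]; split=> //.
have occ e : (0 < e <= n)%N ->
    (first_pos e (word_of f) < m)%N /\ nth 0%R (word_of f) (first_pos e (word_of f)) = Posz e.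
  move=> en; have e_pos := toZ_pos (e:=e) ltac:(lia).
  by apply/(init_in_fib eqv e_pos); [lia | apply: init_in_f; rewrite e_pos; lia].
split; [exact: word_of_bounded | split=> [e en|e e' e_gt0 ee']].
  by rewrite size_word_of; exact: occ.
have e_pos := toZ_pos (e:=e) ltac:(lia); have e'_pos := toZ_pos (e:=e') ltac:(lia).
have := init_lt (ofZ (Posz e)) (ofZ (Posz e')); rewrite e_pos e'_pos.
move=> /(_ ltac:(lia) ltac:(lia) (first_pos e (word_of f)).+1 (first_pos e' (word_of f)).+1).
rewrite (is_init_fib eqv e_pos) ?(is_init_fib eqv e'_pos); try lia.
by have := occ e ltac:(lia); have := occ e' ltac:(lia); lia.
Qed.

(* Every value +-e, 0 < e <= n, is hit at position +-(first position of e + 1). *)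
Lemma occ_ordered_surjective :
  equivariant f -> occ_ordered 0 n (word_of f) -> forall j : elt n, exists i, f i = j.
Proof.
move=> eqv [_ [occ _]] j; have j_n := toZ_bound j; rewrite size_word_of in occ.
case j_eq: (toZ j) j_n => [[|k]|k] j_n.
- by exists (ofZ (Posz 0)); apply: toZ_inj; rewrite equivariantE // toZ_ofZ // j_eq.
- have [pos val] := occ k.+1 ltac:(lia).
  exists (ofZ (Posz (first_pos k.+1 (word_of f)).+1)); apply: toZ_inj.
  by rewrite equivariantE // toZ_ofZ // j_eq /= val.
- have [pos val] := occ k.+1 ltac:(lia).
  exists (ofZ (Negz (first_pos k.+1 (word_of f)))); apply: toZ_inj.
  by rewrite equivariantE // toZ_ofZ // j_eq /= val; lia.
Qed.

Lemma occ_ordered_isOSB : equivariant f -> occ_ordered 0 n (word_of f) -> isOSB f.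
Proof.
move=> eqv occ_f; have [_ [occ ord]] := occ_f; rewrite size_word_of in occ.
split; [exact: occ_ordered_surjective | split=> //; split].
- move=> e e_gt0; have e_pos : toZ e = Posz (absz (toZ e)) by lia.
  apply/(init_in_fib eqv e_pos); first lia.
  by apply: occ; have := toZ_bound e; lia.
- move=> e e' e_gt0 ee' k k'.
  have e_pos : toZ e = Posz (absz (toZ e)) by lia.
  have e'_pos : toZ e' = Posz (absz (toZ e')) by lia.
  rewrite (is_init_fib eqv e_pos) ?(is_init_fib eqv e'_pos); try lia.
  move=> [_ ->] [_ ->]; have := ord (absz (toZ e)) (absz (toZ e')).
  by have := toZ_bound e'; lia.
Qed.

Lemma isOSB_iff : isOSB f <-> equivariant f /\ occ_ordered 0 n (word_of f).
Proof.
split; first exact: isOSB_occ_ordered.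
by move=> [eqv occ]; exact: occ_ordered_isOSB.
Qed.

Lemma isOSB_staircase : isOSB f <-> equivariant f /\ staircase n 0 (word_of f).
Proof. by rewrite isOSB_iff staircase_occ_ordered add0n. Qed.

End Morphisms.

Definition map_of_word (p m : nat) (y : seq int) : {ffun elt p -> elt m} :=
  [ffun d => ofZ (ext_word y (toZ d))].

Lemma map_of_word_equivariant p m y : all (bounded m) y -> equivariant (map_of_word p m y).
Proof.
by move=> y_m d; rewrite !ffunE toZ_sigma ext_wordN sigma_ofZ //; exact: ext_word_bounded.
Qed.

Lemma word_of_map_of_word p m y : all (bounded m) y -> size y = p ->
  word_of (map_of_word p m y) = y.
Proof.
move=> y_m size_y; apply: (@eq_from_nth _ 0%R); first by rewrite size_word_of.
move=> k; rewrite size_word_of => kp; rewrite nth_word_of // ffunE (@toZ_ofZ p (Posz k.+1)) //.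
by rewrite toZ_ofZ //; apply: ext_word_bounded.
Qed.

Section Composition.
Variables (p m n : nat) (f : {ffun elt m -> elt n}) (h : {ffun elt p -> elt m}).

Lemma compB_equivariant : equivariant f -> equivariant h -> equivariant (compB f h).
Proof. by move=> ef eh d; rewrite !ffunE eh ef. Qed.

Lemma word_of_compB :
  equivariant f -> word_of (compB f h) = map (ext_word (word_of f)) (word_of h).
Proof.
by move=> ef; rewrite /word_of -map_comp; apply: eq_map => i /=; rewrite ffunE equivariantE.
Qed.

Lemma compB_isOSB : isOSB f -> isOSB h -> isOSB (compB f h).
Proof.
move=> /isOSB_iff [ef occ_f] /isOSB_iff [eh occ_h]; apply/isOSB_iff.
split; first exact: compB_equivariant.
by rewrite word_of_compB //; exact: (occ_ordered_ext (size_word_of f) occ_f occ_h).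
Qed.

End Composition.

Lemma compB_id p n (f : {ffun elt p -> elt n}) : compB f [ffun i => i] = f.
Proof. by apply/ffunP => d; rewrite !ffunE. Qed.

Lemma id_isOSB n : isOSB ([ffun i => i] : {ffun elt n -> elt n}).
Proof.
apply/isOSB_staircase; split; first by move=> d; rewrite !ffunE.
have -> : word_of ([ffun i => i] : {ffun elt n -> elt n}) = map Posz (iota 1 n).
  by apply/eq_in_map => i; rewrite mem_iota => i_n; rewrite ffunE toZ_ofZ //; lia.
exact: staircase_iota.
Qed.

(* Directedness: the word of an endomorphism is a staircase of minimal length,
   hence equal to 1 2 ... n, the word of the identity. *)
Lemma OSB_endo_id n (f : {ffun elt n -> elt n}) : isOSB f -> f = [ffun i => i].
Proof.
move=> /isOSB_staircase [ef st_f]; have /isOSB_staircase [eid st_id] := id_isOSB n.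
apply: equivariant_word_inj => //.
by rewrite (staircase_exact st_f) ?size_word_of // (staircase_exact st_id) ?size_word_of.
Qed.

Lemma iota_wordE n (a : arr n) : map toZ (iota_word a) = word_of (projT2 a).
Proof.
case: a => m f; rewrite /iota_word /word_of /= -map_comp; apply: eq_map => k /=.
by rewrite /ofZ /= addnC.
Qed.

Lemma size_iota_word n (a : arr n) : size (iota_word a) = projT1 a.
Proof. by rewrite size_map size_iota. Qed.

Lemma iota_word_inj n (a b : arr n) : valid a -> valid b -> iota_word a = iota_word b -> a = b.
Proof.
case: a b => m f [p g] /isOSB_iff [ef _] /isOSB_iff [eg _] ab.
have mp : m = p by have := congr1 size ab; rewrite !size_iota_word.
subst p; have := congr1 (map toZ) ab; rewrite !iota_wordE /= => fg.
by rewrite (equivariant_word_inj ef eg fg : f = g).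
Qed.

Lemma arr_le_refl n (a : arr n) : arr_le a a.
Proof. by case: a => m f; exists [ffun i => i]; rewrite compB_id; split=> //; exact: id_isOSB. Qed.

Lemma arr_le_trans n (a b c : arr n) : arr_le a b -> arr_le b c -> arr_le a c.
Proof.
case: a b c => m1 f1 [m2 f2] [m3 f3] [h1 [O1 E1]] [h2 [O2 E2]] /=; simpl in *.
exists (compB h1 h2); split; first exact: compB_isOSB.
by rewrite E2 E1; apply/ffunP => d; rewrite !ffunE.
Qed.

Lemma arr_le_size n (a b : arr n) : arr_le a b -> (projT1 a <= projT1 b)%N.
Proof.
case: a b => m f [p g] [h [/isOSB_staircase [_ st_h] _]] /=.
by have := staircase_size st_h; rewrite size_word_of.
Qed.

(* ... and comparable arrows of the same length are equal, by directedness. *)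
Lemma arr_le_same_size n (a b : arr n) : arr_le a b -> projT1 a = projT1 b -> a = b.
Proof.
case: a b => m f [p g] [h [h_OSB g_eq]] /= mp; subst p.
by rewrite /= (OSB_endo_id h_OSB) compB_id in g_eq; rewrite g_eq.
Qed.

Lemma map_cat_inv (A B : Type) (f : A -> B) (s : seq A) a b : map f s = a ++ b ->
  exists v1 v2, s = v1 ++ v2 /\ map f v1 = a /\ map f v2 = b.
Proof.
move=> s_eq; exists (take (size a) s), (drop (size a) s); rewrite cat_take_drop.
by rewrite map_take map_drop s_eq take_size_cat // drop_size_cat.
Qed.

Section ConeLanguage.
Variable n : nat.
Implicit Types (pre rest v : seq (elt n)).

Definition known pre : pred (elt n) :=
  fun c => (toZ c == 0%R) || has (fun d => absz (toZ d) == absz (toZ c)) pre.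

(* The words above s = c_1...c_m are those of the form
     known()* c_1 known(c_1)* c_2 known(c_1 c_2)* ... c_m known(c_1...c_m)*;
   [cone_lang pre rest] is this language once the prefix pre of s is read. *)
Fixpoint cone_lang pre rest (v : seq (elt n)) : Prop :=
  match rest with
  | [::] => all (known pre) v
  | c :: rest' => exists v1 v2, v = v1 ++ c :: v2 /\
                  all (known pre) v1 /\ cone_lang (rcons pre c) rest' v2
  end.

Lemma known_ext pre rest c : known pre c <->
  exists z : int, (absz z <= size pre)%N /\ ext_word (map toZ (pre ++ rest)) z = toZ c.
Proof.
have nthE k : (k < size pre)%N ->
    nth 0%R (map toZ (pre ++ rest)) k = toZ (nth ord0 pre k).
  by move=> k_lt; rewrite (nth_map ord0) ?size_cat ?ltn_addr // nth_cat k_lt.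
split.
- case/orP => [/eqP c0|/hasP [d /(nthP ord0) [k k_lt <-] /eqP abs_eq]].
    by exists 0%R; split=> //; rewrite c0.
  have {}abs_eq : absz (toZ (nth ord0 pre k)) = absz (toZ c) :> nat := abs_eq.
  have [c_eq|c_eq] : toZ c = toZ (nth ord0 pre k) \/ toZ c = (- toZ (nth ord0 pre k))%R by lia.
  + by exists (Posz k.+1); split=> //=; rewrite nthE.
  + by exists (Negz k); split=> //=; rewrite nthE.
- move=> [z [z_le z_eq]]; rewrite /known -z_eq {z_eq}.
  case: z z_le => [[|k]|k] z_le; first by rewrite eqxx.
  all: apply/orP; right; apply/hasP; exists (nth ord0 pre k); first exact: mem_nth.
  all: by rewrite /= nthE // ?abszN.
Qed.

Lemma all_known_ext pre rest v : all (known pre) v <->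
  exists y, all (bounded (size pre)) y /\ map toZ v = map (ext_word (map toZ (pre ++ rest))) y.
Proof.
split; last first.
  move=> [y [y_le v_eq]]; apply/allP => d dv; apply/(known_ext _ rest).
  have : toZ d \in map toZ v by apply: map_f.
  by rewrite v_eq => /mapP [z zy ->]; exists z; split=> //; exact: (allP y_le).
elim: v => [|c v IH] /=; first by exists [::].
move=> /andP [/(known_ext _ rest) [z [z_le z_eq]] /IH [y [y_le v_eq]]].
by exists (z :: y); rewrite /= v_eq z_eq; split=> //; apply/andP.
Qed.

Lemma cone_lang_staircase rest pre v : cone_lang pre rest v <->
  exists y, staircase (size rest) (size pre) y /\
            map toZ v = map (ext_word (map toZ (pre ++ rest))) y.
Proof.
elim: rest pre v => [|c rest IH] pre v /=; first exact: all_known_ext.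
have pre_eq : rcons pre c ++ rest = pre ++ c :: rest by rewrite cat_rcons.
have last_eq : nth 0%R (map toZ (pre ++ c :: rest)) (size pre) = toZ c.
  by rewrite map_cat nth_cat size_map ltnn subnn.
split.
- move=> [v1 [v2 [-> [/(all_known_ext _ (c :: rest)) [y1 [y1_le v1_eq]]]]]].
  move=> /IH [y2 [st2 v2_eq]]; rewrite size_rcons pre_eq in st2 v2_eq.
  exists (y1 ++ Posz (size pre).+1 :: y2); split; first by exists y1, y2.
  by rewrite [LHS]map_cat [RHS]map_cat /= v1_eq v2_eq last_eq.
- move=> [y [[y1 [y2 [-> [y1_le st2]]]] v_eq]].
  rewrite map_cat in v_eq; have [v1 [[|c' v2] [-> [v1_eq]]]] := map_cat_inv v_eq => //=.
  rewrite last_eq => -[/toZ_inj -> v2_eq]; exists v1, v2; split=> //; split.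
    by apply/(all_known_ext _ (c :: rest)); exists y1.
  by apply/IH; exists y2; rewrite size_rcons pre_eq.
Qed.

End ConeLanguage.

Section ArrowsAndWords.
Variable n : nat.
Implicit Types (s a : arr n).

(* a lies above s iff a = s o h for an OS_B-morphism h, i.e. iff the word of a is
   the substitution of the word of s into a staircase word: the cone language. *)
Lemma arr_le_cone s a : valid s -> valid a ->
  arr_le s a <-> cone_lang [::] (iota_word s) (iota_word a).
Proof.
case: s a => m fs [p fa]; rewrite /valid /= => /isOSB_iff [es _] /isOSB_iff [ea _].
rewrite cone_lang_staircase /= !iota_wordE size_iota_word /=; split.
- move=> [h [/isOSB_staircase [eh st_h] /= fa_eq]]; exists (word_of h).
  by rewrite fa_eq word_of_compB.
- move=> [y [st_y fa_eq]].
  have [y_m _] := proj1 (staircase_occ_ordered _ _ _) st_y; rewrite add0n in y_m.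
  have size_y : size y = p by rewrite -(size_word_of fa) fa_eq size_map.
  have eh : equivariant (map_of_word p m y) by exact: map_of_word_equivariant.
  exists (map_of_word p m y); split.
    by apply/isOSB_staircase; rewrite word_of_map_of_word.
  apply: equivariant_word_inj => //; first exact: compB_equivariant.
  by rewrite word_of_compB // word_of_map_of_word.
Qed.

Lemma cone_lang_arrow s v : valid s -> cone_lang [::] (iota_word s) v ->
  exists a, valid a /\ iota_word a = v /\ arr_le s a.
Proof.
move=> s_valid v_cone; have /cone_lang_staircase [y [st_y]] := v_cone.
rewrite /= iota_wordE => v_eq.
have v_n : all (bounded n) (map toZ v) by apply/allP => z /mapP [c _ ->]; exact: toZ_bound.
pose a : arr n := existT _ (size v) (map_of_word (size v) n (map toZ v)).
have word_a : word_of (projT2 a) = map toZ v by rewrite word_of_map_of_word // size_map.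
have a_valid : valid a.
  apply/isOSB_iff; split; first exact: map_of_word_equivariant.
  move: s_valid => /isOSB_iff [_ occ_s]; rewrite word_a v_eq.
  apply: (occ_ordered_ext (size_word_of _) occ_s).
  by apply/staircase_occ_ordered; rewrite size_iota_word in st_y.
have word_iota : iota_word a = v by apply: (inj_map (@toZ_inj n)); rewrite iota_wordE.
by exists a; split=> //; split=> //; apply/arr_le_cone => //; rewrite word_iota.
Qed.

(* Every letter is known from the word of a valid arrow (which contains 1..n). *)
Lemma known_valid s c : valid s -> known (iota_word s) c.
Proof.
case: s => m f /isOSB_iff [_ [_ [occ _]]]; rewrite /known.
case: eqP => //= c_neq0; apply/hasP; have c_n := toZ_bound c.
have [pos val] := occ (absz (toZ c)) ltac:(lia); rewrite size_word_of in pos.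
exists (nth ord0 (iota_word (existT _ m f)) (first_pos (absz (toZ c)) (word_of f))).
  by apply: mem_nth; rewrite size_iota_word.
rewrite -(nth_map ord0 0%R) ?size_iota_word //.
by have /= -> := iota_wordE (existT _ m f); rewrite val.
Qed.

End ArrowsAndWords.

(* Strict lexicographic order on integer words (meaningful for equal lengths). *)
Fixpoint lex_lt (u u' : seq int) : bool :=
  match u, u' with
  | c :: u1, c' :: u1' => (c < c')%R || ((c == c') && lex_lt u1 u1')
  | _, _ => false
  end.

Lemma lex_lt_irr u : lex_lt u u = false.
Proof. by elim: u => //= c u ->; rewrite ltxx eqxx. Qed.

Lemma lex_lt_trans u1 u2 u3 : lex_lt u1 u2 -> lex_lt u2 u3 -> lex_lt u1 u3.
Proof.
elim: u1 u2 u3 => [|a u1 IH] [|b u2] [|c u3] //=.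
case/orP => [ab|/andP [/eqP <- l12]]; case/orP => [bc|/andP [/eqP <- l23]].
- by rewrite (lt_trans ab bc).
- by rewrite ab.
- by rewrite bc.
- by rewrite (IH _ _ l12 l23) eqxx orbT.
Qed.

Lemma lex_lt_total u u' : size u = size u' -> [\/ u = u', lex_lt u u' | lex_lt u' u].
Proof.
elim: u u' => [|a u IH] [|b u'] //=; first by constructor.
move=> [] /IH; case: (ltgtP a b) => [ab|ba|<-] cmp; [exact: Or32 | exact: Or33 |].
case: cmp => [->|lt_uu'|lt_u'u]; first exact: Or31.
  by apply: Or32 => /=; exact: lt_uu'.
by apply: Or33 => /=; exact: lt_u'u.
Qed.

Lemma lex_lt_cat p u u' : lex_lt (p ++ u) (p ++ u') = lex_lt u u'.
Proof. by elim: p => //= c p ->; rewrite ltxx eqxx. Qed.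

Lemma lex_lt_first_diff u u' : lex_lt u u' ->
  exists i, (forall j, (j < i)%N -> nth 0%R u j = nth 0%R u' j) /\
            (i < size u)%N /\ (nth 0%R u i < nth 0%R u' i)%R.
Proof.
elim: u u' => [|a u IH] [|b u'] //=.
case/orP => [ab|/andP [/eqP <- /IH [i [agree [i_lt lt_i]]]]]; first by exists 0%N.
by exists i.+1; split=> // [[|j]] //= /agree.
Qed.

Lemma staircase_lex d k y (u u' : seq int) i :
  staircase d k y -> (k <= i < k + d)%N ->
  (forall j, (j < i)%N -> nth 0%R u j = nth 0%R u' j) -> (nth 0%R u i < nth 0%R u' i)%R ->
  lex_lt (map (ext_word u) y) (map (ext_word u') y).
Proof.
elim: d k y => [|d IH] k y /=; first lia.
move=> [y1 [y2 [-> [y1_k st2]]]] ki agree lt_i; rewrite !map_cat.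
have -> : map (ext_word u) y1 = map (ext_word u') y1.
  apply/eq_in_map => z zy; apply: (ext_word_prefix agree).
  by have := allP y1_k z zy; rewrite /bounded; lia.
rewrite lex_lt_cat /=; case: (ltngtP k i) => ki'; last by subst i; rewrite lt_i.
  by rewrite (agree k ki') ltxx eqxx /=; apply: (IH k.+1) => //; lia.
lia.
Qed.

Section WordCode.
Variable n : nat.

(* Reading a word over [-n,n] as a number in base 2n+1 turns the lexicographic
   order on words of a fixed length into the order of nat. *)
Fixpoint word_code (u : seq int) : nat :=
  match u with
  | [::] => 0%N
  | c :: u' => (absz (c + Posz n)%R * n.*2.+1 ^ size u' + word_code u')%N
  end.

Lemma word_code_lt u : all (bounded n) u -> (word_code u < n.*2.+1 ^ size u)%N.
Proof.
elim: u => [|c u IH] //= /andP [c_n /IH code_lt].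
rewrite expnS; have : (absz (c + Posz n)%R < n.*2.+1)%N by move: c_n; rewrite /bounded; lia.
by move: code_lt; set X := _ ^ size u; set a := absz _; nia.
Qed.

Lemma lex_lt_code u u' : size u = size u' -> all (bounded n) u -> all (bounded n) u' ->
  lex_lt u u' -> (word_code u < word_code u')%N.
Proof.
elim: u u' => [|c u IH] [|c' u'] //= [size_eq] /andP [c_n u_n] /andP [c'_n u'_n].
case/orP => [cc'|/andP [/eqP <- /(IH _ size_eq u_n u'_n) lt]]; last by rewrite size_eq; lia.
have := word_code_lt u_n; rewrite size_eq.
have : (absz (c + Posz n)%R < absz (c' + Posz n)%R)%N by move: c_n c'_n; rewrite /bounded; lia.
by set X := _ ^ size u'; set a := absz (c + _)%R; set a' := absz (c' + _)%R; nia.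
Qed.

Definition shortlex (a b : arr n) : Prop :=
  (projT1 a < projT1 b)%N \/
  (projT1 a = projT1 b /\ lex_lt (word_of (projT2 a)) (word_of (projT2 b))).

(* Well-foundedness, by lexicographic induction on (length, code of the word). *)
Lemma shortlex_acc (a : arr n) : valid a -> Acc (fun x y => valid x /\ valid y /\ shortlex x y) a.
Proof.
suff acc L V : forall a : arr n, valid a -> projT1 a = L ->
    word_code (word_of (projT2 a)) = V -> Acc (fun x y => valid x /\ valid y /\ shortlex x y) a.
  by move=> a_valid; exact: acc.
elim/ltn_ind: L V => L IHL; elim/ltn_ind => V IHV b b_valid b_L b_V.
constructor => x [x_valid [_ [lt_len|[eq_len lt_lex]]]].
  by apply: (IHL (projT1 x) _ _ x x_valid erefl erefl); rewrite -b_L.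
apply: (IHV (word_code (word_of (projT2 x))) _ x x_valid _ erefl); last by rewrite eq_len.
rewrite -b_V; apply: lex_lt_code; rewrite ?word_of_bounded //.
by rewrite !size_word_of.
Qed.

Lemma shortlex_well_order : well_order_on (@valid n) shortlex.
Proof.
split; [|split; [|split]].
- by case=> m f _ [|[_]] /=; rewrite ?ltnn ?lex_lt_irr.
- case=> m1 f1 [m2 f2] [m3 f3] _ _ _ [lt12|[eq12 lt12]] [lt23|[eq23 lt23]];
    rewrite /shortlex /=; simpl in *; try (left; lia).
  by right; split; [congruence | subst; exact: lex_lt_trans lt12 lt23].
- case=> m1 f1 [m2 f2] /isOSB_iff [e1 _] /isOSB_iff [e2 _].
  case: (ltngtP m1 m2) => cmp; [by right; left; left | by right; right; left |].
  subst m2; have := @lex_lt_total (word_of f1) (word_of f2); rewrite !size_word_of.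
  case=> // [eq_word|lt|lt]; [left | right; left; right | right; right; right] => //.
  by rewrite (equivariant_word_inj e1 e2 eq_word : f1 = f2).
- exact: shortlex_acc.
Qed.

End WordCode.

(* (G1): the shortlex order is compatible with precomposition by OS_B-morphisms,
   since the words of the precomposites are substitutions into a staircase. *)
Lemma OSBop_G1_holds : OSBop_G1.
Proof.
move=> n; exists (@shortlex n); split; first exact: shortlex_well_order.
move=> m p f g h /isOSB_iff [ef _] /isOSB_iff [eg _] /isOSB_staircase [eh st_h].
case=> [|[_ /= lt]]; first by rewrite /= ltnn.
right; split=> //=; rewrite !word_of_compB //.
have [i [agree [i_lt lt_i]]] := lex_lt_first_diff lt; rewrite size_word_of in i_lt.
by apply: (staircase_lex st_h _ agree lt_i); lia.
Qed.

Lemma ex_min_measure (A : Type) (mu : A -> nat) (P : A -> Prop) :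
  (exists x, P x) -> exists x, P x /\ forall y, P y -> (mu x <= mu y)%N.
Proof.
move=> [x Px]; move: {2}(mu x) (erefl (mu x)) => k; elim/ltn_ind: k x Px => k IH x Px mu_x.
have [[y [Py lt_y]]|no_smaller] := classic (exists y, P y /\ (mu y < k)%N).
  exact: IH lt_y y Py erefl.
exists x; split=> // y Py; rewrite mu_x leqNgt; apply/negP => lt_y.
by apply: no_smaller; exists y.
Qed.

Lemma increasing_selection (A : Type) (mu : A -> nat) (P : A -> Prop) :
  (forall N, exists x, P x /\ (N <= mu x)%N) ->
  exists g : nat -> A, (forall i j, (i < j)%N -> (mu (g i) < mu (g j))%N) /\ forall i, P (g i).
Proof.
move=> unbounded; have [x0 _] := unbounded 0%N.
pose next N := epsilon (inhabits x0) (fun x => P x /\ (N <= mu x)%N).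
have next_spec N : P (next N) /\ (N <= mu (next N))%N by exact: epsilon_spec (unbounded N).
pose g := fix g i := if i is i'.+1 then next (mu (g i')).+1 else next 0%N.
have g_step i : (mu (g i) < mu (g i.+1))%N by exact: (next_spec _).2.
exists g; split; last by case=> [|i]; exact: (next_spec _).1.
move=> i j; elim: j => // j IH; rewrite ltnS leq_eqVlt => /orP [/eqP ->|lt_ij] //.
exact: ltn_trans (IH lt_ij) (g_step j).
Qed.

Section Higman.
Variable T : finType.

Lemma infinitely_often (a : nat -> T) : exists a0, forall N, exists k, (N <= k)%N /\ a k = a0.
Proof.
apply: NNPP => none.
have bound a0 : exists N, forall k, (N <= k)%N -> a k <> a0.
  apply: NNPP => unbounded; apply: none; exists a0 => N; apply: NNPP => no_k.
  by apply: unbounded; exists N => k Nk ak; apply: no_k; exists k.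
pose N a0 := epsilon (inhabits 0%N) (fun N => forall k, (N <= k)%N -> a k <> a0).
have N_spec a0 k : (N a0 <= k)%N -> a k <> a0 by apply: (epsilon_spec _ _ (bound a0)).
pose M := (\max_(x : T) N x)%N.
by apply: (N_spec (a M) M); first exact: leq_bigmax.
Qed.

Definition bad (g : nat -> seq T) := forall i j, (i < j)%N -> ~~ subseq (g i) (g j).

Section MinimalBad.
(* Nash-Williams' minimal bad sequence: assuming some bad sequence exists, choose
   each word of minimal size among those continuing the prefix to a bad sequence. *)
Definition extends_bad (pref : seq (seq T)) :=
  exists g, bad g /\ forall i, (i < size pref)%N -> g i = nth [::] pref i.

Definition next_min (pref : seq (seq T)) : seq T :=
  epsilon (inhabits [::]) (fun x => extends_bad (rcons pref x) /\
                                    forall y, extends_bad (rcons pref y) -> (size x <= size y)%N).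

Lemma next_min_spec pref : extends_bad pref ->
  extends_bad (rcons pref (next_min pref)) /\
  forall y, extends_bad (rcons pref y) -> (size (next_min pref) <= size y)%N.
Proof.
move=> [g [g_bad g_pref]].
suff ext : exists x, extends_bad (rcons pref x).
  exact: (epsilon_spec _ _ (ex_min_measure size ext)).
exists (g (size pref)), g; split=> // i; rewrite size_rcons ltnS leq_eqVlt nth_rcons.
by case/orP => [/eqP ->|lt_i]; rewrite ?ltnn ?eqxx // lt_i g_pref.
Qed.

Fixpoint min_prefix (k : nat) : seq (seq T) :=
  if k is k'.+1 then rcons (min_prefix k') (next_min (min_prefix k')) else [::].

Definition min_bad (i : nat) : seq T := next_min (min_prefix i).

Lemma min_prefixE k : min_prefix k = map min_bad (iota 0 k).
Proof. by elim: k => // k IH; rewrite -addn1 iotaD map_cat add0n -IH /= cats1 addn1. Qed.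

Lemma nth_min_prefix k i : (i < k)%N -> nth [::] (min_prefix k) i = min_bad i.
Proof. by move=> ik; rewrite min_prefixE (nth_map 0%N) ?size_iota // nth_iota. Qed.

Lemma size_min_prefix k : size (min_prefix k) = k.
Proof. by rewrite min_prefixE size_map size_iota. Qed.

Hypothesis some_bad : extends_bad [::].

Lemma min_prefix_extends k : extends_bad (min_prefix k).
Proof. by elim: k => //= k IH; exact: (next_min_spec IH).1. Qed.

Lemma min_bad_bad : bad min_bad.
Proof.
move=> i j ij; have [h [h_bad h_pref]] := min_prefix_extends j.+1.
rewrite -(nth_min_prefix (ltn_trans ij (ltnSn j))) -(nth_min_prefix (ltnSn j)).
by rewrite -!h_pref ?size_min_prefix //; [exact: h_bad | exact: ltn_trans ij (ltnSn j)].
Qed.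

Lemma min_bad_minimal k h : bad h -> (forall i, (i < k)%N -> h i = min_bad i) ->
  (size (min_bad k) <= size (h k))%N.
Proof.
move=> h_bad h_agree; apply: (next_min_spec (min_prefix_extends k)).2; exists h.
split=> // i; rewrite size_rcons size_min_prefix ltnS leq_eqVlt nth_rcons size_min_prefix.
by case/orP => [/eqP ->|lt_i]; rewrite ?ltnn ?eqxx // lt_i nth_min_prefix // h_agree.
Qed.

(* The words of min_bad are nonempty, since [::] embeds in everything. *)
Lemma min_bad_cons k : exists c t, min_bad k = c :: t.
Proof.
case E: (min_bad k) => [|c t]; last by exists c, t.
by have := min_bad_bad (ltnSn k); rewrite E sub0seq.
Qed.

(* Contradiction: infinitely many words of min_bad start with the same letter a0;
   replacing them from the K 0-th on by their tails gives a bad sequence whose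
   (K 0)-th word is shorter than min_bad (K 0). *)
Lemma no_bad_sequence : False.
Proof.
have [x0 [t0 _]] := min_bad_cons 0.
pose a k := head x0 (min_bad k); pose t k := behead (min_bad k).
have min_badE k : min_bad k = a k :: t k by rewrite /a /t; have [c [t' ->]] := min_bad_cons k.
have [a0 often] := infinitely_often a.
have [K [K_incr K_a0]] :
    exists K, (forall i j, (i < j)%N -> (K i < K j)%N) /\ forall i, a (K i) = a0.
  apply: (@increasing_selection _ id (fun k => a k = a0)) => N.
  by have [k [Nk ak]] := often N; exists k.
have K0_le i : (K 0 <= K i)%N by case: i => // i; exact/ltnW/K_incr.
pose h i := if (i < K 0)%N then min_bad i else t (K (i - K 0)).
have h_bad : bad h.
  move=> i j ij; rewrite /h; case: (ltnP i (K 0)) => hi; case: (ltnP j (K 0)) => hj.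
  - exact: min_bad_bad.
  - have lt_iK : (i < K (j - K 0))%N by exact: leq_trans hi (K0_le _).
    apply: contraNN (min_bad_bad lt_iK) => sub_t; rewrite [min_bad (K _)]min_badE.
    exact: subseq_trans sub_t (subseq_cons _ _).
  - by have := leq_ltn_trans hi ij; rewrite ltnNge (ltnW hj).
  - have lt_K : (K (i - K 0) < K (j - K 0))%N.
      by apply: K_incr; rewrite ltn_sub2r //; exact: leq_ltn_trans hi ij.
    apply: contraNN (min_bad_bad lt_K) => sub_t.
    by rewrite !min_badE !K_a0 /= eqxx.
have h_agree i : (i < K 0)%N -> h i = min_bad i by rewrite /h => ->.
have := min_bad_minimal h_bad h_agree.
by rewrite /h ltnn subnn min_badE /= ltnn.
Qed.

End MinimalBad.

Lemma higman (f : nat -> seq T) : exists i j, (i < j)%N /\ subseq (f i) (f j).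
Proof.
apply: NNPP => no_pair; apply: (@no_bad_sequence _); exists f; split=> // i j ij.
by apply/negP => sub; apply: no_pair; exists i, j.
Qed.

End Higman.

Section Annotation.
Variable n : nat.

(* Annotate each letter of a word with the set of letters read before it; an
   embedding of annotated words preserves the known letters at each step. *)
Fixpoint annotate (B : {set elt n}) (v : seq (elt n)) : seq (elt n * {set elt n}) :=
  if v is c :: v' then (c, B) :: annotate (c |: B) v' else [::].

Lemma subseq_annotate v B x E : subseq (x :: E) (annotate B v) ->
  exists v1 c v2, v = v1 ++ c :: v2 /\ x = (c, B :|: [set:: v1]) /\
                  subseq E (annotate (c |: (B :|: [set:: v1])) v2).
Proof.
elim: v B => [|d v IH] B //=.
case: ifP => [/eqP -> sub|_ /IH [v1 [c [v2 [-> [-> sub]]]]]].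
  by exists [::], d, v; rewrite set_nil setU0.
exists (d :: v1), c, v2; split=> //.
have <- : d |: B :|: [set:: v1] = B :|: [set:: d :: v1].
  by apply/setP => z; rewrite !inE ?in_cons; case: (z == d); case: (z \in B).
by split.
Qed.

Lemma annotate_cone (rest pre v : seq (elt n)) :
  subseq (annotate [set:: pre] rest) (annotate [set:: pre] v) ->
  all (known (pre ++ rest)) v -> cone_lang pre rest v.
Proof.
elim: rest pre v => [|c rest IH] pre v /=; first by rewrite cats0.
move=> /subseq_annotate [v1 [c' [v2 [-> [[<- pre_eq] sub]]]]].
rewrite all_cat /= => /and3P [known1 _ known2].
exists v1, v2; split=> //; split.
  apply/allP => d dv; apply/orP; right; apply/hasP; exists d => //.
  have : d \in [set:: pre] :|: [set:: v1] by rewrite in_setU [d \in [set:: v1]]inE dv orbT.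
  by rewrite -pre_eq inE.
apply: IH; last by rewrite cat_rcons.
have -> : [set:: rcons pre c] = c |: [set:: pre].
  by apply/setP => z; rewrite !inE mem_rcons in_cons.
by rewrite -pre_eq in sub.
Qed.

Lemma annotate_arr_le (s a : arr n) : valid s -> valid a ->
  subseq (annotate set0 (iota_word s)) (annotate set0 (iota_word a)) -> arr_le s a.
Proof.
move=> s_valid a_valid sub; apply/arr_le_cone => //; apply: annotate_cone.
  by rewrite set_nil.
by apply/allP => c _; exact: known_valid.
Qed.

End Annotation.

Definition holds (P : Prop) : bool := if excluded_middle_informative P then true else false.

Lemma holdsP (P : Prop) : reflect P (holds P).
Proof. by rewrite /holds; case: excluded_middle_informative => p; constructor. Qed.

Section MinimalElements.
Variables (n : nat) (I : arr n -> Prop).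
Hypothesis I_up : upclosed I.

(* Comparable minimal elements are equal (the poset is directed). *)
Lemma minimal_le_eq a b : minimal_in I a -> minimal_in I b -> arr_le a b -> a = b.
Proof.
move=> [Ia _] [_ b_min] ab; have ba := b_min a Ia ab.
by apply: (arr_le_same_size ab); apply/eqP; rewrite eqn_leq !arr_le_size.
Qed.

(* Below every element of I lies a minimal one: take one of shortest length. *)
Lemma exists_minimal a : I a -> exists s, minimal_in I s /\ arr_le s a.
Proof.
move=> Ia; have below_a : exists s, I s /\ arr_le s a by exists a; split=> //; exact: arr_le_refl.
have [s [[Is sa] s_short]] := ex_min_measure (fun s : arr n => projT1 s) below_a.
exists s; split=> //; split=> // b Ib bs.
have bs_size := s_short b (conj Ib (arr_le_trans bs sa)).
have eq_size : projT1 b = projT1 s by apply/eqP; rewrite eqn_leq (arr_le_size bs) bs_size.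
by rewrite (arr_le_same_size bs eq_size); exact: arr_le_refl.
Qed.

Lemma short_minimal_list L : exists S : seq (arr n),
  (forall s, s \in S -> minimal_in I s) /\
  (forall a, minimal_in I a -> (projT1 a < L)%N -> a \in S).
Proof.
elim: L => [|L [S [S_min S_all]]]; first by exists [::].
exists (S ++ [seq (existT _ L f : arr n) |
              f <- enum {ffun elt L -> elt n} & holds (minimal_in I (existT _ L f))]).
split=> [s|[m f] a_min /=].
  by rewrite mem_cat => /orP [/S_min //|/mapP [f]]; rewrite mem_filter => /andP [/holdsP ? _] ->.
rewrite ltnS leq_eqVlt mem_cat => /orP [/eqP eq_mL|lt_mL]; last by rewrite S_all.
by subst m; apply/orP; right; apply: map_f; rewrite mem_filter mem_enum andbT; apply/holdsP.
Qed.

(* Minimal elements have bounded length: otherwise Higman's lemma, applied to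
   the annotated words of minimal elements of increasing length, would produce
   two distinct comparable minimal elements. *)
Lemma minimal_bounded : exists L, forall a, minimal_in I a -> (projT1 a < L)%N.
Proof.
apply: NNPP => unbounded.
have [A [A_incr A_min]] : exists A : nat -> arr n,
    (forall i j, (i < j)%N -> (projT1 (A i) < projT1 (A j))%N) /\ forall i, minimal_in I (A i).
  apply: increasing_selection => L; apply: NNPP => none; apply: unbounded; exists L.
  by move=> a a_min; rewrite ltnNge; apply/negP => La; apply: none; exists a.
have A_valid i : valid (A i) by apply: I_up.1; exact: (A_min i).1.
have [i [j [ij sub]]] := higman (fun i => annotate set0 (iota_word (A i))).
have := minimal_le_eq (A_min i) (A_min j) (annotate_arr_le (A_valid i) (A_valid j) sub).
by move=> eq_ij; have := A_incr i j ij; rewrite eq_ij ltnn.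
Qed.

Lemma minimal_list : exists S : seq (arr n),
  (forall s, s \in S -> minimal_in I s) /\ (forall a, minimal_in I a -> a \in S).
Proof.
have [L short] := minimal_bounded; have [S [S_min S_all]] := short_minimal_list L.
by exists S; split=> // a a_min; exact: S_all _ a_min (short a a_min).
Qed.

Lemma cone_lang_ordered (pre rest : seq (elt n)) : ordered_lang (cone_lang pre rest).
Proof.
elim: rest pre => [|c rest IH] pre /=; first exact: OL_star.
apply: (OL_ext (L1 := fun u => exists u1 u2, u = u1 ++ u2 /\ all (known pre) u1 /\
           exists u3 u4, u2 = u3 ++ u4 /\ u3 = [:: c] /\ cone_lang (rcons pre c) rest u4)).
  move=> u; split.
    by move=> [u1 [_ [-> [known1 [u3 [u4 [-> [-> cone4]]]]]]]]; exists u1, u4.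
  move=> [v1 [v2 [-> [known1 cone2]]]].
  by exists v1, ([:: c] ++ v2); split=> //; split=> //; exists [:: c], v2.
by apply: OL_cat; [exact: OL_star | apply: OL_cat; [exact: OL_single | exact: IH]].
Qed.

Lemma cone_union_ordered (S : seq (arr n)) :
  ordered_lang (fun w => exists2 s, s \in S & cone_lang [::] (iota_word s) w).
Proof.
elim: S => [|s S IH].
  by apply: (OL_ext (L1 := fun _ => False)) => [u|]; [split=> // [[s]] | exact: OL_empty].
apply: (OL_ext (L1 := fun u => cone_lang [::] (iota_word s) u \/
                               exists2 s', s' \in S & cone_lang [::] (iota_word s') u)).
  move=> u; split=> [[cone_u|[s' s'S cone_u]]|[s' s'S cone_u]].
  - by exists s; rewrite ?mem_head.
  - by exists s'; rewrite // in_cons s'S orbT.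
  - by move: s'S; rewrite in_cons => /orP [/eqP <-|s'S]; [left | right; exists s'].
by apply: OL_union => //; exact: cone_lang_ordered.
Qed.

(* The image of an upward-closed set is the union of the cones above its
   finitely many minimal elements. *)
Lemma upclosed_image_ordered :
  ordered_lang (fun w : seq (elt n) => exists a, I a /\ w = iota_word a).
Proof.
have [S [S_min S_all]] := minimal_list.
apply: (OL_ext (L1 := fun w => exists2 s, s \in S & cone_lang [::] (iota_word s) w)); last first.
  exact: cone_union_ordered.
move=> w; split=> [[s sS cone_w]|[a [Ia ->]]].
- have [Is _] := S_min s sS.
  have [a [a_valid [<- sa]]] := cone_lang_arrow (I_up.1 s Is) cone_w.
  by exists a; split=> //; exact: I_up.2 s a a_valid Is sa.
- have [s [s_min sa]] := exists_minimal Ia; exists s; first exact: S_all.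
  by apply/arr_le_cone => //; apply: I_up.1; [exact: s_min.1 | exact: Ia].
Qed.

End MinimalElements.

Theorem mainTheorem10 : OSBop_Grobner /\ OSBop_Olingual_wrt_iota.
Proof.
split; [split; [|split]|].
- move=> n f; exact: OSB_endo_id.
- exact: OSBop_G1_holds.
- move=> n I I_up; have [S [S_min S_all]] := minimal_list I_up.
  by exists S; split=> // a a_min; exists a; [exact: S_all | split; exact: arr_le_refl].
- move=> n; split; [|split].
  + by move=> a b a_valid b_valid /(iota_word_inj a_valid b_valid) ->; split; exact: arr_le_refl.
  + by move=> a _; rewrite size_iota_word.
  + by move=> I I_up; exact: upclosed_image_ordered.
Qed.
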